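(* Let $H$ and $H'$ be Hessenberg spaces of $n\times n$ matrices, each minimal in its $E_{1n}$-equivalence class. Then $X_H\subseteq X_{H'}$ if and only if $H\subseteq H'$.
   Context: $B$ is the group of invertible upper-triangular $n\times n$ complex matrices; $[g]$ denotes the flag whose $k$-dimensional subspace is spanned by the first $k$ columns of $g$. $E_{kl}$ is the matrix unit with $1$ in entry $(k,l)$. A Hessenberg space is a subspace of the form $H_h=\operatorname{span}\{E_{kl}: k\le h(l)\}$ for a nondecreasing function $h:\{1,\dots,n\}\to\{0,1,\dots,n\}$. For a Hessenberg space $K$, $X_K=\{[g]\in GL_n(\mathbb{C})/B: g^{-1}E_{1n}g\in K\}$. Two Hessenberg spaces $K,K'$ are $E_{1n}$-equivalent if $X_K=X_{K'}$; $K$ is minimal in its $E_{1n}$-equivalence class if no Hessenberg space properly contained in $K$ is $E_{1n}$-equivalent to $K$. *)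

From HB Require Import structures.
From mathcomp Require Import all_boot all_order all_algebra.
From mathcomp Require Import complex Rstruct.
Set Implicit Arguments. Unset Strict Implicit. Unset Printing Implicit Defensive.
Import GRing.Theory.
Local Open Scope ring_scope.

Definition C : fieldType := complex Rdefinitions.R.

(* Indices are 0-based: row/column k (1-based) is the ordinal k-1 in 'I_n. *)

Definition Eunit (n : nat) (k l : 'I_n) : 'M[C]_n := delta_mx k l.

Definition E1n (n : nat) : 'M[C]_n :=
  \matrix_(i, j) (((i : nat) == 0%N) && ((j : nat) == n.-1))%:R.

(* A Hessenberg function h : {1..n} -> {0..n}, nondecreasing.
   Represented as h : 'I_n -> nat (h l = value at column l+1). *)
Definition hess_fun (n : nat) (h : 'I_n -> nat) : Prop :=
  (forall l, (h l <= n)%N) /\ (forall l l' : 'I_n, (l <= l')%N -> (h l <= h l')%N).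

(* H_h = span{E_{kl} : k <= h(l)}  (1-based), i.e. 0-based row i with i < h j. *)
Definition hess_space (n : nat) (h : 'I_n -> nat) : {vspace 'M[C]_n} :=
  <<[seq Eunit i j | i <- enum 'I_n, j <- [seq j <- enum 'I_n | (i < h j)%N]]>>%VS.

Definition is_hess_space (n : nat) (K : {vspace 'M[C]_n}) : Prop :=
  exists h, hess_fun h /\ K = hess_space h.

(* Flags in C^n: a flag is given by its k-dimensional subspaces, k = 0..n. *)
Definition flag (n : nat) := 'I_n.+1 -> {vspace 'cV[C]_n}.

Definition flag_of (n : nat) (g : 'M[C]_n) : flag n :=
  fun k => <<[seq col j g | j : 'I_n <- enum 'I_n & (nat_of_ord j < nat_of_ord k)%N]>>%VS.

(* X_K = { [g] in GL_n(C)/B : g^{-1} E_{1n} g \in K }, as a set of flags. *)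
Definition X (n : nat) (K : {vspace 'M[C]_n}) (F : flag n) : Prop :=
  exists g : 'M[C]_n, g \in unitmx /\ (forall k, F k = flag_of g k) /\
    (invmx g *m E1n n *m g) \in K.

Definition X_subset (n : nat) (K K' : {vspace 'M[C]_n}) : Prop :=
  forall F : flag n, X K F -> X K' F.

Definition E1n_equiv (n : nat) (K K' : {vspace 'M[C]_n}) : Prop :=
  forall F : flag n, X K F <-> X K' F.

Definition minimal_hess (n : nat) (K : {vspace 'M[C]_n}) : Prop :=
  is_hess_space K /\
  forall K' : {vspace 'M[C]_n}, is_hess_space K' -> (K' <= K)%VS -> K' != K ->
    ~ E1n_equiv K' K.

From HB Require Import structures.
From mathcomp Require Import all_boot all_order all_algebra all_fingroup.
From mathcomp Require Import complex Rstruct zify.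
Set Implicit Arguments. Unset Strict Implicit. Unset Printing Implicit Defensive.
Import GRing.Theory.
Local Open Scope ring_scope.

(* Two invertible matrices g, g'
   define the same flag iff g^-1 g' is upper triangular, so passing to another
   representative g b of [g] replaces g^-1 E_1n g by b^-1 (g^-1 E_1n g) b.
   If h'(j) <= i < h(j) with i <> j (or n = 1), a permutation matrix conjugates E_1n to
   E_ij, which lies in H_h, while every b^-1 E_ij b has nonzero (i,j) entry
   (b^-1)_ii b_jj; so this flag is in X_{H_h} but not in X_{H_h'}.  Hence
   X_{H_h} <= X_{H_h'} forces h(j) <= h'(j), except when h(j) = j+1 and h'(j) = j.
   Such a column j cannot exist if H_h is minimal.  For n > 1 every g^-1 E_1n g is a
   rank one matrix u v^T with v^T u = 0, which within its flag class can be brought to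
   the form e_a w^T with w_a = 0; so removing the diagonal entry (j,j) from H_h, i.e.
   lowering h(j) to j, does not change X_{H_h}.  Minimality thus yields l < j with
   h(l) > j >= l+1; column l is not exceptional, and h'(l) >= h(l) > j = h'(j)
   contradicts the monotonicity of h'. *)

Lemma mulmx_delta_mxE (R : pzRingType) m n p q (A : 'M[R]_(m, n)) (B : 'M[R]_(p, q))
    i j r s :
  (A *m delta_mx i j *m B) r s = A r i * B j s.
Proof.
by rewrite -(mul_delta_mx (0 : 'I_1)) mulmxA -colE -mulmxA -rowE mxE big_ord1 !mxE.
Qed.

Lemma invmxM (R : comUnitRingType) n (A B : 'M[R]_n) :
  A \in unitmx -> B \in unitmx -> invmx (A *m B) = invmx B *m invmx A.
Proof.
move=> Au Bu; have ABu : A *m B \in unitmx by rewrite unitmx_mul Au Bu.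
rewrite -[RHS]mulmx1 -(mulmxV ABu) !mulmxA -(mulmxA _ _ A) mulVmx //.
by rewrite mulmx1 mulVmx // mul1mx.
Qed.

Section UpperTriangular.
Variables (F : fieldType) (n : nat).
Implicit Types b : 'M[F]_n.

Definition upper_trig b := forall i j : 'I_n, (j < i)%N -> b i j = 0.

Lemma det_upper_trig b : upper_trig b -> \det b = \prod_i b i i.
Proof.
move=> ub; rewrite -det_tr det_trig; last by apply/is_trig_mxP => i j ij; rewrite mxE ub.
by apply: eq_bigr => i _; rewrite mxE.
Qed.

Lemma upper_trig_unitmxP b : upper_trig b -> reflect (forall i, b i i != 0) (b \in unitmx).
Proof.
move=> ub; rewrite unitmxE det_upper_trig // unitfE.
by apply: (iffP (prodf_neq0 _ _)) => bd i => [|_]; apply: bd.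
Qed.

Lemma upper_trig_invmx b : upper_trig b -> b \in unitmx -> upper_trig (invmx b).
Proof.
move=> ub bu i; have bd := upper_trig_unitmxP ub bu.
suff: forall k (j : 'I_n), j = k :> nat -> (j < i)%N -> invmx b i j = 0.
  by move=> + j; apply.
elim/ltn_ind => k IHk j jk ji; subst k.
have := congr1 (fun A : 'M_n => A i j) (mulVmx bu).
rewrite !mxE (bigD1 j) //= big1 => [|m mj].
  rewrite addr0 -val_eqE (gtn_eqF ji) => /eqP; rewrite mulf_eq0 (negPf (bd j)) orbF.
  by move/eqP.
have [jm|mj_le] := ltnP j m; first by rewrite ub ?mulr0.
have mj_lt : (m < j)%N by rewrite ltn_neqAle mj_le andbT.
by rewrite (IHk m) ?mul0r // (ltn_trans mj_lt).
Qed.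

End UpperTriangular.

Lemma col_in_flag_of n (g : 'M[C]_n) (k : 'I_n.+1) (l : 'I_n) :
  (l < k)%N -> col l g \in flag_of g k.
Proof.
by move=> lk; apply: memv_span; apply: map_f; rewrite mem_filter lk mem_enum.
Qed.

Lemma flag_of_mulmx_sub n (g b : 'M[C]_n) k :
  upper_trig b -> (flag_of (g *m b) k <= flag_of g k)%VS.
Proof.
move=> ub; apply/span_subvP => x /mapP[l]; rewrite mem_filter => /andP[lk _] ->.
have -> : col l (g *m b) = \sum_m b m l *: col m g.
  by apply/matrixP => p q; rewrite !mxE summxE; apply: eq_bigr => m _; rewrite !mxE mulrC.
apply: memv_suml => m _; have [mk|km] := ltnP m k; first exact/memvZ/col_in_flag_of.
by rewrite ub ?scale0r ?mem0v // (leq_trans lk km).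
Qed.

Lemma flag_of_mulmx n (g b : 'M[C]_n) k :
  upper_trig b -> b \in unitmx -> flag_of (g *m b) k = flag_of g k.
Proof.
move=> ub bu; apply/eqP; rewrite eqEsubv flag_of_mulmx_sub //=.
by rewrite -{1}(mulmxK bu g) flag_of_mulmx_sub //; apply: upper_trig_invmx.
Qed.

Lemma flag_of_coord0 n (g : 'M[C]_n) (k : 'I_n.+1) x : g \in unitmx ->
  x \in flag_of g k -> forall r : 'I_n, (k <= r)%N -> (invmx g *m x) r 0 = 0.
Proof.
move=> gu xF r kr; rewrite (coord_span (X := in_tuple _) xF) mulmx_sumr summxE.
apply: big1 => m _; rewrite -scalemxAr mxE.
set X := [seq _ | _ <- _ & _]; have : (in_tuple X)`_m \in X by apply: mem_nth.
case/mapP => l; rewrite mem_filter => /andP[lk _] ->.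
rewrite colE mulmxA mulVmx // -colE !mxE.
case: eqP => [rl|_]; last by rewrite mulr0.
by move: lk; rewrite -rl ltnNge kr.
Qed.

Lemma flag_of_eq_upper_trig n (g g' : 'M[C]_n) : g \in unitmx ->
  (forall k, flag_of g k = flag_of g' k) -> upper_trig (invmx g *m g').
Proof.
move=> gu Eflag r s sr; have sn : (s.+1 < n.+1)%N by rewrite ltnS.
have := @flag_of_coord0 _ g (Ordinal sn) (col s g') gu.
rewrite Eflag col_in_flag_of // colE mulmxA -colE => /(_ isT r sr).
by rewrite mxE.
Qed.

Definition conjE1n n (g : 'M[C]_n) := invmx g *m E1n n *m g.

Lemma conjE1n_mulmx n (g b : 'M[C]_n) : g \in unitmx -> b \in unitmx ->
  conjE1n (g *m b) = invmx b *m conjE1n g *m b.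
Proof. by move=> gu bu; rewrite /conjE1n invmxM // !mulmxA. Qed.

Lemma conjE1n_flag_entry n (g g' : 'M[C]_n) i j :
  g \in unitmx -> g' \in unitmx -> conjE1n g = delta_mx i j ->
  (forall k, flag_of g k = flag_of g' k) -> conjE1n g' i j != 0.
Proof.
move=> gu g'u Eg Eflag; have ub := flag_of_eq_upper_trig gu Eflag.
have bu : invmx g *m g' \in unitmx by rewrite unitmx_mul unitmx_inv gu.
rewrite -(mulKVmx gu g') conjE1n_mulmx // Eg mulmx_delta_mxE mulf_neq0 //.
  by apply/(upper_trig_unitmxP (upper_trig_invmx ub bu)); rewrite unitmx_inv.
exact/(upper_trig_unitmxP ub).
Qed.

Lemma E1nE n : E1n n.+1 = delta_mx 0 ord_max.
Proof. by apply/matrixP => i j; rewrite !mxE. Qed.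

Lemma exists_perm2 (T : finType) (x y x' y' : T) :
  (x == y) = (x' == y') -> exists s : {perm T}, s x = x' /\ s y = y'.
Proof.
move=> Exy; exists (tperm x x' * tperm (tperm x x' y) y')%g; rewrite !permM tpermL.
have [exy|xy] := eqVneq x y.
  by move: Exy; rewrite exy eqxx tpermL => /esym/eqP->; rewrite tpermL.
have x'y' : y' != x' by rewrite eq_sym -Exy.
rewrite tpermL tpermD //.
by rewrite -[x' in _ != x'](tpermL x x') (inj_eq perm_inj) eq_sym.
Qed.

Lemma conjE1n_delta n (i j : 'I_n) : (i == j) = (n == 1)%N ->
  exists2 g, g \in unitmx & conjE1n g = delta_mx i j.
Proof.
case: n i j => [[]//|n] i j Eij.
have [s [s0 smax]] : exists s : 'S_n.+1, s 0 = i /\ s ord_max = j.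
  by apply: exists_perm2; rewrite Eij -val_eqE /= eq_sym.
exists (perm_mx s); first exact: unitmx_perm.
apply/matrixP => r c; rewrite /conjE1n E1nE mulmx_delta_mxE.
rewrite -[invmx _]/((perm_mx s)^-1) -perm_mxV !mxE (canF_eq (permKV s)) s0 smax.
by rewrite (eq_sym j) -natrM mulnb.
Qed.

Lemma hess_memP n (h : 'I_n -> nat) (M : 'M[C]_n) :
  reflect (forall i j : 'I_n, (h j <= i)%N -> M i j = 0) (M \in hess_space h).
Proof.
apply: (iffP idP) => [MH i j hi|M0].
  rewrite (coord_span (X := in_tuple _) MH) summxE; apply: big1 => k _; rewrite mxE.
  set S := [seq _ | _ <- _, _ <- _]; have : (in_tuple S)`_k \in S by apply: mem_nth.
  case/allpairsPdep => i' [j' [_ + ->]]; rewrite mem_filter => /andP[ij' _].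
  rewrite mxE; case: eqP => [ii'|_]; last by rewrite mulr0.
  case: eqP => [jj'|_]; last by rewrite mulr0.
  by move: ij'; rewrite -ii' -jj' ltnNge hi.
rewrite (matrix_sum_delta M); apply: memv_suml => i _; apply: memv_suml => j _.
have [ij|hi] := ltnP i (h j); last by rewrite M0 // scale0r mem0v.
apply/memvZ/memv_span/allpairsPdep.
by exists i, j; rewrite mem_enum mem_filter ij mem_enum.
Qed.

Lemma delta_mx_hess_space n (h : 'I_n -> nat) i j :
  (delta_mx i j \in hess_space h) = (i < h j)%N.
Proof.
apply/hess_memP/idP => [d0|ij r s hs].
  by rewrite ltnNge; apply/negP => /d0/eqP; rewrite mxE !eqxx oner_eq0.
rewrite mxE; case: eqP => [ri|_] //; case: eqP => [sj|_] //.
by move: hs; rewrite ri sj leqNgt ij.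
Qed.

Lemma hess_space_le n (h h' : 'I_n -> nat) :
  (forall j, (h j <= h' j)%N) -> (hess_space h <= hess_space h')%VS.
Proof.
move=> hh'; apply/subvP => M /hess_memP M0; apply/hess_memP => i j hi.
exact/M0/(leq_trans (hh' j)).
Qed.

Lemma X_subsetS n (K K' : {vspace 'M[C]_n}) : (K <= K')%VS -> X_subset K K'.
Proof.
by move=> KK' F [g [gu [Fg gK]]]; exists g; split=> //; split=> //; apply: (subvP KK').
Qed.

Lemma not_X_subset_hess n (h h' : 'I_n -> nat) (i j : 'I_n) :
  (i == j) = (n == 1)%N -> (h' j <= i < h j)%N ->
  ~ X_subset (hess_space h) (hess_space h').
Proof.
move=> Eij /andP[h'i ih] Xs; have [g gu Eg] := conjE1n_delta Eij.
have XF : X (hess_space h) (flag_of g).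
  by exists g; split=> //; split=> //; rewrite -/(conjE1n g) Eg delta_mx_hess_space.
have [g' [g'u [Eflag /hess_memP g'0]]] := Xs _ XF.
by have := conjE1n_flag_entry gu g'u Eg Eflag; rewrite /conjE1n g'0 ?eqxx.
Qed.

Lemma X_subset_hess_le_or_drop n (h h' : 'I_n -> nat) :
  (forall j, (h j <= n)%N) -> X_subset (hess_space h) (hess_space h') ->
  forall j, (h j <= h' j)%N \/ [/\ (1 < n)%N, h j = j.+1 & h' j = j].
Proof.
move=> hn Xs j; have [|h'j] := leqP (h j) (h' j); [by left | right].
have jn := ltn_ord j; have hjn := hn j.
have [n1|n2] := leqP n 1.
  exfalso; apply: (@not_X_subset_hess _ h h' j j _ _ Xs).
    by rewrite eqxx; apply/esym/eqP; lia.
  by apply/andP; split; lia.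
have [h'jj|h'jj] := eqVneq (h' j) j.
  have [hj|hj] := leqP (h j) j.+1; first by split=> //; lia.
  exfalso; have sjn : (j.+1 < n)%N by lia.
  apply: (@not_X_subset_hess _ h h' (Ordinal sjn) j _ _ Xs).
    by rewrite -val_eqE /= gtn_eqF // gtn_eqF.
  by rewrite /= h'jj leqnSn hj.
exfalso; have h'jn : (h' j < n)%N by lia.
apply: (@not_X_subset_hess _ h h' (Ordinal h'jn) j _ _ Xs).
  by rewrite -val_eqE /= (negPf h'jj) gtn_eqF.
by rewrite /= leqnn h'j.
Qed.

Definition lower_at n (h : 'I_n -> nat) (j : 'I_n) : 'I_n -> nat :=
  fun l => if l == j then nat_of_ord j else h l.

Lemma hess_fun_lower_at n (h : 'I_n -> nat) (j : 'I_n) :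
  hess_fun h -> h j = j.+1 -> (forall l : 'I_n, (l < j)%N -> (h l <= j)%N) ->
  hess_fun (lower_at h j).
Proof.
move=> [hn hmono] hj hlow; split=> [l|l l']; rewrite /lower_at.
  by case: eqP => _; [exact: ltnW | exact: hn].
case: (eqVneq l j) => [->|lj]; case: (eqVneq l' j) => [->|l'j] //= ll'.
- by apply: leq_trans (hmono _ _ ll'); rewrite hj leqnSn.
- by apply: hlow; rewrite ltn_neqAle ll' andbT.
- exact: hmono.
Qed.

Lemma hess_space_lower_at_sub n (h : 'I_n -> nat) (j : 'I_n) :
  (j <= h j)%N -> (hess_space (lower_at h j) <= hess_space h)%VS.
Proof. by move=> jh; apply: hess_space_le => l; rewrite /lower_at; case: eqP => [->|]. Qed.

Lemma conjE1n_offdiag n (g : 'M[C]_n.+2) : g \in unitmx ->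
  exists b, [/\ upper_trig b, b \in unitmx &
    forall r s, conjE1n (g *m b) r s != 0 -> (r != s) && (conjE1n g r s != 0)].
Proof.
(* g^-1 E_1n g = u v^T with u = g^-1 e_1 and v^T the last row of g.  If a is the last
   nonzero index of u and b is 1 with column a replaced by u, then b^-1 u = e_a and the
   new conjugate is e_a (v^T b), where (v^T b)_s = v_s for s <> a and (v^T b)_a = v^T u,
   the (n,1) entry of g g^-1 = 1, which is 0. *)
move=> gu; pose u r := invmx g r 0.
have [i0 ui0] : exists i0, u i0 != 0.
  apply/existsP; apply: contraT => /existsPn u0.
  have := congr1 (fun A : 'M_n.+2 => A 0 0) (mulmxV gu).
  rewrite !mxE eqxx big1 => [/eqP|m _]; first by rewrite eq_sym oner_eq0.
  by move/negPn/eqP: (u0 m); rewrite /u => ->; rewrite mulr0.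
have [a ua amax] := @arg_maxnP _ i0 (fun r => u r != 0) val ui0.
pose b : 'M[C]_n.+2 := \matrix_(r, s) if s == a then u r else (r == s)%:R.
have ub : upper_trig b.
  move=> r s sr; rewrite mxE; case: eqP => [sa|_]; last by rewrite -val_eqE /= gtn_eqF.
  by apply/eqP; apply: contraTT sr => /amax; rewrite /= -sa leqNgt.
have bu : b \in unitmx.
  apply/(upper_trig_unitmxP ub) => i; rewrite mxE.
  by case: (eqVneq i a) => [->|_]; rewrite ?eqxx ?oner_neq0.
have inv_gb r : invmx (g *m b) r 0 = (r == a)%:R.
  have := congr1 (fun A : 'M_n.+2 => A r a) (mulVmx bu).
  by rewrite invmxM // !mxE => <-; apply: eq_bigr => k _; rewrite mxE eqxx.
have gb_max s : (g *m b) ord_max s = if s == a then 0 else g ord_max s.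
  have -> : (g *m b) ord_max s =
      \sum_m g ord_max m * (if s == a then u m else (m == s)%:R).
    by rewrite mxE; apply: eq_bigr => m _; rewrite mxE.
  case: (eqVneq s a) => _ /=.
    have := congr1 (fun A : 'M_n.+2 => A ord_max 0) (mulmxV gu).
    by rewrite !mxE -val_eqE /=.
  by rewrite (bigD1 s) //= eqxx mulr1 big1 ?addr0 // => m /negPf->; rewrite mulr0.
exists b; split=> // r s; rewrite /conjE1n !E1nE !mulmx_delta_mxE inv_gb gb_max.
rewrite mulr_natl mulrb; case: (eqVneq r a) => [->|_]; last by rewrite eqxx.
case: (eqVneq s a) => [->|sa]; first by rewrite eqxx.
by move=> gs; rewrite (mulf_neq0 ua gs).
Qed.

Lemma E1n_equiv_lower_at n (h : 'I_n -> nat) (j : 'I_n) : (1 < n)%N -> h j = j.+1 ->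
  E1n_equiv (hess_space (lower_at h j)) (hess_space h).
Proof.
case: n h j => [|[|n]] // h j _ hj F; split.
  by apply/X_subsetS/hess_space_lower_at_sub; rewrite hj.
case=> g [gu [Fg /hess_memP g0]]; have [b [ub bu supp]] := conjE1n_offdiag gu.
exists (g *m b); split; first by rewrite unitmx_mul gu.
split=> [k|]; first by rewrite flag_of_mulmx.
apply/hess_memP => r s; apply: contraTeq => /supp /andP[rs grs].
have rh : (r < h s)%N by rewrite ltnNge; apply: contra grs => /g0 ->.
rewrite /lower_at -ltnNge; case: eqP => [sj|_] //.
by subst s; rewrite ltn_neqAle -ltnS -hj rh andbT; exact: rs.
Qed.

Lemma minimal_hess_prev_gt n (h : 'I_n -> nat) (j : 'I_n) :
  hess_fun h -> minimal_hess (hess_space h) -> (1 < n)%N -> h j = j.+1 ->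
  exists2 l : 'I_n, (l < j)%N & (j < h l)%N.
Proof.
move=> hf [_ hmin] n2 hj; apply/exists_inP; apply: contraT.
rewrite negb_exists_in => /forall_inP hlow; exfalso.
have jhj : (j <= h j)%N by rewrite hj.
apply: (hmin _ _ (hess_space_lower_at_sub jhj) _ (E1n_equiv_lower_at n2 hj)).
  exists (lower_at h j); split=> //.
  by apply: hess_fun_lower_at => // l /hlow; rewrite -leqNgt.
apply/eqP => Ehl; move: (delta_mx_hess_space h j j).
by rewrite -Ehl delta_mx_hess_space /lower_at eqxx hj ltnn ltnSn.
Qed.

Unset Implicit Arguments.
Set Strict Implicit.

Theorem mainTheorem7 (n : nat) (H H' : {vspace 'M[C]_n}) :
  is_hess_space H -> is_hess_space H' ->
  minimal_hess H -> minimal_hess H' ->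
  (X_subset H H' <-> (H <= H')%VS).
Proof.
move=> [h [hf ->]] [h' [hf' ->]] hmin _; split; last exact: X_subsetS.
move=> Xs; have hle := X_subset_hess_le_or_drop hf.1 Xs.
apply: hess_space_le => j; case: (hle j) => [//|[n2 hj h'j]].
have [l lj jhl] := minimal_hess_prev_gt hf hmin n2 hj.
case: (hle l) => [hl|[_ hl _]]; last by move: jhl; rewrite hl ltnS leqNgt lj.
by have := leq_trans jhl (leq_trans hl (hf'.2 l j (ltnW lj))); rewrite h'j ltnn.
Qed.
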